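(* Let $(X,*,0)$ be a solid weak BCC-algebra and $a\in I(X)$. If $x,y\in B(a)$, then $x*(x*y)\in B(a)$ and $y*(y*x)\in B(a)$.
   Context: A weak BCC-algebra is a set $X$ with a binary operation $*$ and a constant $0$ satisfying, for all $x,y,z\in X$: (i) $((x*y)*(z*y))*(x*z)=0$; (ii) $x*x=0$; (iii) $x*0=x$; (iv) $x*y=y*x=0$ implies $x=y$. The relation $x\leqslant y$ iff $x*y=0$ is a partial order on $X$. Let $I(X)$ be the set of minimal elements of $X$ with respect to $\leqslant$. For $a\in I(X)$ the branch initiated by $a$ is $B(a)=\{x\in X: a\leqslant x\}$; ''belonging to the same branch'' means lying in a common $B(a)$. A weak BCC-algebra is called (left) solid if $(x*y)*z=(x*z)*y$ holds for all $x,y$ belonging to the same branch and all $z\in X$. *)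

Definition weak_BCC {X : Type} (m : X -> X -> X) (z : X) : Prop :=
  (forall x y w : X, m (m (m x y) (m w y)) (m x w) = z) /\
  (forall x : X, m x x = z) /\
  (forall x : X, m x z = x) /\
  (forall x y : X, m x y = z -> m y x = z -> x = y).

Definition bcc_le {X : Type} (m : X -> X -> X) (z : X) (x y : X) : Prop :=
  m x y = z.

Definition minimal_elt {X : Type} (m : X -> X -> X) (z : X) (a : X) : Prop :=
  forall x : X, bcc_le m z x a -> x = a.

Definition branch {X : Type} (m : X -> X -> X) (z : X) (a x : X) : Prop :=
  bcc_le m z a x.

Definition same_branch {X : Type} (m : X -> X -> X) (z : X) (x y : X) : Prop :=
  exists a : X, minimal_elt m z a /\ branch m z a x /\ branch m z a y.

Definition solid {X : Type} (m : X -> X -> X) (z : X) : Prop :=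
  forall x y w : X, same_branch m z x y -> m (m x y) w = m (m x w) y.


(* Three instances of axiom (i), ((u * v) * (w * v)) * (u * w) = 0, suffice:
   with (a, y, x) it shows 0 <= x * y; with (a, x * y, 0) it shows
   a * (x * y) <= a, so a * (x * y) = a by minimality of a; with (a, x * y, x)
   it then gives a <= x * (x * y). *)

Section WeakBCCBranch.

Variables (X : Type) (m : X -> X -> X) (z : X).
Hypothesis HX : weak_BCC m z.

Lemma bcc_le_zero_mul (a x y : X) :
  bcc_le m z a x -> bcc_le m z a y -> bcc_le m z z (m x y).
Proof.
  destruct HX as [Hi [_ [Hiii _]]].
  unfold bcc_le; intros Hx Hy.
  pose proof (Hi a y x) as E.
  rewrite Hy, Hx, Hiii in E.
  exact E.
Qed.

Lemma minimal_mul_fixed (a u : X) :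
  minimal_elt m z a -> bcc_le m z z u -> m a u = a.
Proof.
  destruct HX as [Hi [_ [Hiii _]]].
  unfold minimal_elt, bcc_le; intros Ha Hu.
  apply Ha.
  pose proof (Hi a u z) as E.
  rewrite Hu, !Hiii in E.
  exact E.
Qed.

Lemma branch_mul_fixed (a x u : X) :
  m a u = a -> branch m z a x -> branch m z a (m x u).
Proof.
  destruct HX as [Hi [_ [Hiii _]]].
  unfold branch, bcc_le; intros Hau Hx.
  pose proof (Hi a u x) as E.
  rewrite Hx, Hiii, Hau in E.
  exact E.
Qed.

Lemma branch_mul_mul (a x y : X) :
  minimal_elt m z a -> branch m z a x -> branch m z a y ->
  branch m z a (m x (m x y)).
Proof.
  intros Ha Hx Hy.
  apply branch_mul_fixed; [| exact Hx].
  apply minimal_mul_fixed; [exact Ha |].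
  exact (bcc_le_zero_mul a x y Hx Hy).
Qed.

End WeakBCCBranch.

Theorem corollary3p3 (X : Type) (m : X -> X -> X) (z : X)
  (HX : weak_BCC m z) (Hsolid : solid m z)
  (a : X) (Ha : minimal_elt m z a) (x y : X)
  (Hx : branch m z a x) (Hy : branch m z a y) :
  branch m z a (m x (m x y)) /\ branch m z a (m y (m y x)).
Proof.
  split; apply branch_mul_mul; assumption.
Qed.
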